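(* Let $m,n$ be positive integers and $d=2^n$. For a positive integer $k$ let $\ket{b_k}\coloneqq 2^{-k/2}\sum_{i=0}^{2^k-1}\ket{i}\otimes\ket{i}\in\mathbb{C}^{2^k}\otimes\mathbb{C}^{2^k}$, where $\{\ket{i}\}$ is the computational basis. Let $U_p$ be any unitary operator on $\mathbb{C}^{2^m}\otimes\mathbb{C}^{2^n}$, and define the state on $\mathbb{C}^{2^m}\otimes\mathbb{C}^{2^m}\otimes\mathbb{C}^{2^n}\otimes\mathbb{C}^{2^n}$ $$\ket{\varphi}=\left(I_{2^m}\otimes U_p\otimes I_{2^n}\right)\left(\ket{b_m}\otimes\ket{b_n}\right),$$ where $U_p$ acts on the second and third tensor factors. Let $\rho=\operatorname{tr}_{A_2}\left(\ket{\varphi}\bra{\varphi}\right)$ be the density matrix on $\mathbb{C}^{2^n}\otimes\mathbb{C}^{2^n}$ obtained by tracing out the first two tensor factors $A_2=\mathbb{C}^{2^m}\otimes\mathbb{C}^{2^m}$. For $i,j\in\{0,\dots,d-1\}$ let $$p(i,j)\coloneqq 2^n\operatorname{tr}\left(\rho\,\ket{ij}\bra{ij}\right),$$ where $\ket{ij}=\ket{i}\otimes\ket{j}$ with $\ket{i},\ket{j}$ computational basis vectors of $\mathbb{C}^{2^n}$. Let $\{\mathbf{e}_i\}_{i=0}^{d-1}$ be the canonical basis of $\mathbb{R}^{d}$. Then the $d\times d$ matrix $$Q=\sum_{i,j=0}^{d-1}p(i,j)\,\mathbf{e}_i\mathbf{e}_j^\top$$ is doubly stochastic, i.e. $Q$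 has nonnegative real entries, $Q\mathbf{1}_d=\mathbf{1}_d$ and $Q^\top\mathbf{1}_d=\mathbf{1}_d$.
   Context: $\mathbf{1}_d$ denotes the all-ones vector in $\mathbb{R}^d$; $I_k$ the $k\times k$ identity matrix; $\operatorname{tr}_{A_2}$ the partial trace over subsystem $A_2$. *)

(* Complex scalars: an arbitrary numClosedFieldType C
   (covers the complex numbers). *)
From HB Require Import structures.
From mathcomp Require Import all_boot all_order all_algebra.
From mathcomp Require Import spectral.
From mathcomp.real_closed Require Import mxtens.
Set Implicit Arguments. Unset Strict Implicit. Unset Printing Implicit Defensive.
Import Order.TTheory GRing.Theory Num.Theory.
Local Open Scope ring_scope.
Local Open Scope sesquilinear_scope.

Section Defs.
Variable C : numClosedFieldType.

Definition ket {k : nat} (i : 'I_k) : 'cV[C]_k := delta_mx i 0.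

(* |b_k> = 2^{-k/2} sum_i |i> (x) |i>  ; tensor = Kronecker product tensmx,
   with index convention |i>(x)|j> = |i * dim2 + j>. *)
Definition bell (k : nat) : 'cV[C]_(2 ^ k * 2 ^ k) :=
  (sqrtC (2 ^ k)%:R)^-1 *: \sum_(i < 2 ^ k) tensmx (ket i) (ket i).

Definition dim_assoc4 (a b c d : nat) : ((a * b) * (c * d) = (a * (b * c)) * d)%N.
Proof. by rewrite !mulnA. Defined.

(* |phi> = (I_{2^m} (x) U_p (x) I_{2^n}) (|b_m> (x) |b_n>) on
   C^{2^m} (x) C^{2^m} (x) C^{2^n} (x) C^{2^n}; castmx only re-brackets the
   (associative) tensor product of the four factors. *)
Definition phi (m n : nat) (Up : 'M[C]_(2 ^ m * 2 ^ n)) :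
  'cV[C]_((2 ^ m * 2 ^ m) * (2 ^ n * 2 ^ n)) :=
  castmx (esym (dim_assoc4 (2 ^ m) (2 ^ m) (2 ^ n) (2 ^ n)), erefl)
    (tensmx (tensmx (1%:M : 'M[C]_(2 ^ m)) Up) (1%:M : 'M[C]_(2 ^ n)) *m
     castmx (dim_assoc4 (2 ^ m) (2 ^ m) (2 ^ n) (2 ^ n), erefl)
       (tensmx (bell m) (bell n))).

Definition ptrace1 {p q : nat} (M : 'M[C]_(p * q)) : 'M[C]_q :=
  \matrix_(j, j') \sum_(i < p) M (mxtens_index (i, j)) (mxtens_index (i, j')).

Definition rho (m n : nat) (Up : 'M[C]_(2 ^ m * 2 ^ n)) : 'M[C]_(2 ^ n * 2 ^ n) :=
  ptrace1 (phi Up *m (phi Up) ^t*).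

Definition pij (m n : nat) (Up : 'M[C]_(2 ^ m * 2 ^ n)) (i j : 'I_(2 ^ n)) : C :=
  (2 ^ n)%:R * \tr (rho Up *m (tensmx (ket i) (ket j) *m (tensmx (ket i) (ket j)) ^t*)).

Definition Qmx (m n : nat) (Up : 'M[C]_(2 ^ m * 2 ^ n)) : 'M[C]_(2 ^ n) :=
  \sum_(i < 2 ^ n) \sum_(j < 2 ^ n) pij Up i j *: (ket i *m (ket j)^T).

End Defs.

From HB Require Import structures.
From mathcomp Require Import all_boot all_order all_algebra.
From mathcomp Require Import spectral.
From mathcomp.real_closed Require Import mxtens.
From mathcomp Require Import ring.
Set Implicit Arguments. Unset Strict Implicit. Unset Printing Implicit Defensive.
Import Order.TTheory GRing.Theory Num.Theory.
Local Open Scope ring_scope.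
Local Open Scope sesquilinear_scope.

(* The maximally entangled inputs turn U_p into the amplitudes of phi:
   <a b e f|phi> = 2^(-(m+n)/2) <b e|U_p|a f>.  Hence
   p(e, f) = 2^(-m) sum_(a,b) |<b e|U_p|a f>|^2 >= 0.  Summing over f (resp. e)
   collects, for each of the 2^m values of b (resp. a), the squared moduli of a
   whole row (resp. column) of the unitary U_p, and each of these sums is 1. *)

Lemma big_mxtens_index (V : nmodType) p q (F : 'I_(p * q) -> V) :
  \sum_k F k = \sum_(i < p) \sum_(j < q) F (mxtens_index (i, j)).
Proof.
rewrite pair_big /= (reindex (@mxtens_index p q)) /=; first by apply: eq_bigr => -[].
by exists (@mxtens_unindex p q) => k _; rewrite (mxtens_indexK, mxtens_unindexK).
Qed.

Lemma sum_eq_natr_mull (R : pzSemiRingType) (I : finType) (i0 : I) (F : I -> R) :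
  \sum_i (i0 == i)%:R * F i = F i0.
Proof.
rewrite (bigD1 i0) //= eqxx mul1r big1 ?addr0 // => i.
by rewrite eq_sym => /negbTE->; rewrite mul0r.
Qed.

Lemma sum_eq_natr_mulr (R : pzSemiRingType) (I : finType) (i0 : I) (F : I -> R) :
  \sum_i F i * (i0 == i)%:R = F i0.
Proof.
rewrite (bigD1 i0) //= eqxx mulr1 big1 ?addr0 // => i.
by rewrite eq_sym => /negbTE->; rewrite mulr0.
Qed.

Lemma eq_mxtens_index p q (i i' : 'I_p) (j j' : 'I_q) :
  (mxtens_index (i, j) == mxtens_index (i', j')) = (i == i') && (j == j').
Proof. by rewrite (inj_eq (can_inj (@mxtens_indexK p q))) xpair_eqE. Qed.

Lemma tens_delta_mx (R : pzRingType) m n p q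
    (i : 'I_m) (j : 'I_n) (k : 'I_p) (l : 'I_q) :
  delta_mx i j *t delta_mx k l =
  delta_mx (mxtens_index (i, k)) (mxtens_index (j, l)) :> 'M[R]_(_, _).
Proof.
apply/matrixP => r s; case: (mxtens_indexP r) => i' k'; case: (mxtens_indexP s) => j' l'.
by rewrite tensmxE !mxE !eq_mxtens_index -natrM mulnb andbACA.
Qed.

Lemma mxtrace_mul_delta (R : comPzRingType) n (A : 'M[R]_n) (i j : 'I_n) :
  \tr (A *m delta_mx i j) = A j i.
Proof.
rewrite -(@mul_delta_mx _ _ 1 _ 0) mulmxA -colE mxtrace_mulC -rowE.
by rewrite /mxtrace big_ord1 !mxE.
Qed.

Lemma trmxC_delta (C : numClosedFieldType) m n (i : 'I_m) (j : 'I_n) :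
  (delta_mx i j)^t* = delta_mx j i :> 'M[C]_(n, m).
Proof. by rewrite trmx_delta map_delta_mx. Qed.

Lemma unitarymx_row_norm (C : numClosedFieldType) m n (U : 'M[C]_(m, n)) i :
  U \is unitarymx -> \sum_k `|U i k| ^+ 2 = 1.
Proof.
move=> /unitarymxP/matrixP/(_ i i); rewrite !mxE eqxx mulr1n => <-.
by apply: eq_bigr => k _; rewrite !mxE normCK.
Qed.

Lemma unitarymx_col_norm (C : numClosedFieldType) n (U : 'M[C]_n) j :
  U \is unitarymx -> \sum_k `|U k j| ^+ 2 = 1.
Proof.
rewrite -trmx_unitary => /(unitarymx_row_norm j) <-.
by apply: eq_bigr => k _; rewrite mxE.
Qed.

Lemma mulmx_tens1mx1E (R : comPzRingType) p q r s
    (A : 'M[R]_q) (B : 'M[R]_(p * q * r, s)) i x k l :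
  ((1%:M *t A *t 1%:M : 'M_(p * q * r)) *m B)
    (mxtens_index (mxtens_index (i, x), k)) l =
  \sum_y A x y * B (mxtens_index (mxtens_index (i, y), k)) l.
Proof.
rewrite mxE (@big_mxtens_index _ (p * q) r) (@big_mxtens_index _ p q).
under eq_bigr do under eq_bigr do under eq_bigr do rewrite !tensmxE !mxE mulrAC.
under eq_bigr do under eq_bigr do rewrite sum_eq_natr_mulr -mulrA.
under eq_bigr do rewrite -mulr_sumr.
by rewrite sum_eq_natr_mull.
Qed.

Lemma cast_ord_tens_assoc a b c d (e : (a * b) * (c * d) = (a * (b * c)) * d)
    (i : 'I_a) (j : 'I_b) (k : 'I_c) (l : 'I_d) :
  cast_ord e (mxtens_index (mxtens_index (i, j), mxtens_index (k, l))) =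
  mxtens_index (mxtens_index (i, mxtens_index (j, k)), l).
Proof. by apply: val_inj => /=; ring. Qed.

Lemma cast_ord_tens_assocV a b c d (e : (a * (b * c)) * d = (a * b) * (c * d))
    (i : 'I_a) (j : 'I_b) (k : 'I_c) (l : 'I_d) :
  cast_ord e (mxtens_index (mxtens_index (i, mxtens_index (j, k)), l)) =
  mxtens_index (mxtens_index (i, j), mxtens_index (k, l)).
Proof. by apply: val_inj => /=; ring. Qed.

Lemma ptrace1_mul_trmxC_diag (C : numClosedFieldType) p q (v : 'cV[C]_(p * q)) j :
  ptrace1 (v *m v^t*) j j = \sum_i `|v (mxtens_index (i, j)) 0| ^+ 2.
Proof. by rewrite mxE; apply: eq_bigr => i _; rewrite mxE big_ord1 !mxE normCK. Qed.

Lemma sqr_normV_sqrtC (C : numClosedFieldType) (x : C) :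
  0 <= x -> `|(sqrtC x)^-1| ^+ 2 = x^-1.
Proof. by move=> x_ge0; rewrite normfV ger0_norm ?sqrtC_ge0 // exprVn sqrtCK. Qed.

Section DoublyStochastic.
Variables (C : numClosedFieldType) (m n : nat).
Local Notation M := (2 ^ m)%N.
Local Notation D := (2 ^ n)%N.

Lemma pow2_natr_neq0 k : (2 ^ k)%:R != 0 :> C.
Proof. by rewrite pnatr_eq0 expn_eq0. Qed.

Lemma tens_ket p q (i : 'I_p) (j : 'I_q) :
  ket C i *t ket C j = ket C (mxtens_index (i, j)).
Proof. by rewrite tens_delta_mx; congr delta_mx; apply: val_inj. Qed.

Lemma bellE k (x y : 'I_(2 ^ k)) :
  bell C k (mxtens_index (x, y)) 0 = (sqrtC (2 ^ k)%:R)^-1 * (x == y)%:R.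
Proof.
rewrite mxE summxE; congr (_ * _).
under eq_bigr do rewrite tens_ket mxE eq_mxtens_index andbT -mulnb natrM.
by rewrite sum_eq_natr_mull eq_sym.
Qed.

(* [j] is kept general because [castmxE] leaves a cast of [0] in the column. *)
Lemma bell_tens_assocE (a : 'I_M) (y : 'I_(M * D)) (f : 'I_D) (j : 'I_(1 * 1)) :
  castmx (dim_assoc4 M M D D, erefl) (bell C m *t bell C n)
    (mxtens_index (mxtens_index (a, y), f)) j =
  (sqrtC M%:R)^-1 * (sqrtC D%:R)^-1 * (mxtens_index (a, f) == y)%:R.
Proof.
case: (mxtens_indexP y) => b e {y}.
rewrite castmxE cast_ord_tens_assocV.
rewrite (_ : cast_ord _ j = mxtens_index (0, 0)); last by apply: val_inj; case: j => -[].
rewrite tensmxE !bellE mulrACA eq_mxtens_index -mulnb natrM.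
by rewrite [f == e]eq_sym.
Qed.

Variable Up : 'M[C]_(M * D).

Lemma phiE (a b : 'I_M) (e f : 'I_D) :
  phi Up (mxtens_index (mxtens_index (a, b), mxtens_index (e, f))) 0 =
  (sqrtC M%:R)^-1 * (sqrtC D%:R)^-1 *
  Up (mxtens_index (b, e)) (mxtens_index (a, f)).
Proof.
rewrite castmxE cast_ord_tens_assoc mulmx_tens1mx1E.
under eq_bigr do rewrite bell_tens_assocE mulrCA.
by rewrite -mulr_sumr sum_eq_natr_mulr.
Qed.

Lemma rhoE (e f : 'I_D) :
  rho Up (mxtens_index (e, f)) (mxtens_index (e, f)) =
  (M%:R)^-1 * (D%:R)^-1 *
  \sum_(a < M) \sum_(b < M) `|Up (mxtens_index (b, e)) (mxtens_index (a, f))| ^+ 2.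
Proof.
rewrite ptrace1_mul_trmxC_diag big_mxtens_index mulr_sumr; apply: eq_bigr => a _.
rewrite mulr_sumr; apply: eq_bigr => b _.
by rewrite phiE !normrM !exprMn !sqr_normV_sqrtC ?ler0n.
Qed.

Lemma pijE (e f : 'I_D) :
  pij Up e f =
  (M%:R)^-1 *
  \sum_(a < M) \sum_(b < M) `|Up (mxtens_index (b, e)) (mxtens_index (a, f))| ^+ 2.
Proof.
rewrite /pij tens_ket trmxC_delta mul_delta_mx mxtrace_mul_delta rhoE.
by rewrite -mulrA mulrCA mulVKf ?pow2_natr_neq0.
Qed.

Lemma QmxE : Qmx Up = \matrix_(i, j) pij Up i j.
Proof.
rewrite [RHS]matrix_sum_delta; apply: eq_bigr => i _; apply: eq_bigr => j _.
by rewrite /ket trmx_delta mul_delta_mx mxE.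
Qed.

Lemma pij_ge0 e f : 0 <= pij Up e f.
Proof.
rewrite pijE mulr_ge0 ?invr_ge0 ?ler0n //.
by do 2![apply: sumr_ge0 => ? _]; rewrite exprn_ge0.
Qed.

Hypothesis Up_unitary : Up \is unitarymx.

Lemma sum_pij_row e : \sum_f pij Up e f = 1.
Proof.
under eq_bigr do rewrite pijE.
rewrite -mulr_sumr exchange_big; under eq_bigr do rewrite exchange_big.
rewrite exchange_big /=.
under eq_bigr => b _ do
  rewrite -(big_mxtens_index (fun k => `|Up (mxtens_index (b, e)) k| ^+ 2))
          unitarymx_row_norm //.
by rewrite sumr_const card_ord mulVf ?pow2_natr_neq0.
Qed.

Lemma sum_pij_col f : \sum_e pij Up e f = 1.
Proof.
under eq_bigr do rewrite pijE.
rewrite -mulr_sumr exchange_big; under eq_bigr do rewrite exchange_big.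
under eq_bigr => a _ do
  rewrite -(big_mxtens_index (fun k => `|Up k (mxtens_index (a, f))| ^+ 2))
          unitarymx_col_norm //.
by rewrite sumr_const card_ord mulVf ?pow2_natr_neq0.
Qed.

End DoublyStochastic.

Theorem lemma2 (C : numClosedFieldType) (m n : nat) (hm : (0 < m)%N) (hn : (0 < n)%N)
  (Up : 'M[C]_(2 ^ m * 2 ^ n)) (hU : Up \is unitarymx) :
  (forall i j : 'I_(2 ^ n), 0 <= Qmx Up i j) /\
  Qmx Up *m (const_mx 1 : 'cV[C]_(2 ^ n)) = const_mx 1 /\
  (Qmx Up)^T *m (const_mx 1 : 'cV[C]_(2 ^ n)) = const_mx 1.
Proof.
split; first by move=> i j; rewrite QmxE mxE pij_ge0.
split; apply/matrixP => i k; rewrite !mxE.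
- rewrite -[RHS](sum_pij_row hU i); apply: eq_bigr => j _.
  by rewrite QmxE !mxE mulr1.
- rewrite -[RHS](sum_pij_col hU i); apply: eq_bigr => j _.
  by rewrite QmxE !mxE mulr1.
Qed.
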